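(* Let $n\ge3$ and let $A$ be a real symmetric diagonally dominant $n\times n$ matrix all of whose entries are positive. Let $m$ be the largest off-diagonal entry of $A$, $\ell$ the smallest entry of $A$, and $\delta=\max_i\Delta_i(A)$. Then the condition number $\kappa_\infty(A)=\|A\|_\infty\|A^{-1}\|_\infty$ satisfies $$\kappa_\infty(A)\le\frac{(2m(n-1)+\delta)(3n-4)}{2\ell(n-2)(n-1)}.$$
   Context: For a real $n\times n$ matrix $A$, $\Delta_i(A)=|A_{ii}|-\sum_{j\ne i}|A_{ij}|$; $A$ is diagonally dominant if $\Delta_i(A)\ge0$ for all $i$. $\|A\|_\infty$ is the maximum absolute row sum of $A$. *)

From HB Require Import structures.
From mathcomp Require Import all_boot all_order all_algebra.
Set Implicit Arguments. Unset Strict Implicit. Unset Printing Implicit Defensive.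
Import Order.TTheory GRing.Theory Num.Theory.
Local Open Scope ring_scope.

Definition Delta (R : realFieldType) (n : nat) (A : 'M[R]_n) (i : 'I_n) : R :=
  `|A i i| - \sum_(j < n | j != i) `|A i j|.

Definition diag_dominant (R : realFieldType) (n : nat) (A : 'M[R]_n) : Prop :=
  forall i, 0 <= Delta A i.

Definition inf_norm (R : realFieldType) (m n : nat) (A : 'M[R]_(m, n)) : R :=
  \big[Num.max/0]_(i < m) \sum_(j < n) `|A i j|.

Definition cond_inf (R : realFieldType) (n : nat) (A : 'M[R]_n) : R :=
  inf_norm A * inf_norm (invmx A).

(* largest off-diagonal entry (default 0 is harmless: entries are positive) *)
Definition max_offdiag (R : realFieldType) (n : nat) (A : 'M[R]_n) : R :=
  \big[Num.max/0]_(i < n) \big[Num.max/0]_(j < n | j != i) A i j.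

(* largest entry, used only as a neutral default for the minimum *)
Definition max_entry (R : realFieldType) (n : nat) (A : 'M[R]_n) : R :=
  \big[Num.max/0]_(i < n) \big[Num.max/0]_(j < n) A i j.

(* smallest entry of A (for n > 0 the default max_entry A is neutral) *)
Definition min_entry (R : realFieldType) (n : nat) (A : 'M[R]_n) : R :=
  \big[Num.min/max_entry A]_(i < n) \big[Num.min/max_entry A]_(j < n) A i j.

(* delta = max_i Delta_i(A) (default 0 harmless under diagonal dominance) *)
Definition max_Delta (R : realFieldType) (n : nat) (A : 'M[R]_n) : R :=
  \big[Num.max/0]_(i < n) Delta A i.

From HB Require Import structures.
From mathcomp Require Import all_boot all_order all_algebra.
From mathcomp Require Import ring lra.
Set Implicit Arguments. Unset Strict Implicit. Unset Printing Implicit Defensive.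
Import Order.TTheory GRing.Theory Num.Theory.
Local Open Scope ring_scope.

(* Write N = n, l for the smallest entry and c = 2 (N - 2) (N - 1) / (3 N - 4).
   The bound is the product of  ||A||_oo <= 2 m (N - 1) + delta  (a row sum is
   Delta_i plus twice the off-diagonal sum) and  ||A^-1||_oo <= 1 / (l c).  The
   latter follows from the lower bound  l c |x_j| <= max_i |(A x)_i|.

   That lower bound is proved by duality.  Call w sign-compatible with x when
   w_i x_i >= 0 and (w_i + w_j) (x_i + x_j) >= 0 for all i, j.  Splitting
   A = (A - l) + l and using symmetry and diagonal dominance gives, with
   S = sum_j x_j,
       l * sum_i w_i ((N - 2) x_i + S) <= sum_i w_i (A x)_i <= max|A x| ||w||_1.
   It remains to find, when x_k = M = max_j |x_j|, a sign-compatible w with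
   sum_i w_i ((N - 2) x_i + S) >= c M ||w||_1: the unit vector at k works
   unless S is very negative; otherwise a cutoff vector (the sign of x_i on
   the coordinates beyond a threshold) works, which reduces to an inequality
   between a few real aggregates of x. *)

Lemma const_bounds (R : realFieldType) (N c : R) (N3 : 3 <= N)
    (hc : c * (3 * N - 4) = 2 * (N - 2) * (N - 1)) :
  N - 2 < 2 * c /\ c < N - 2.
Proof.
have K0 : 0 < 3 * N - 4 by lra.
split; rewrite -(ltr_pM2r K0).
- have -> : 2 * c * (3 * N - 4) = 2 * (c * (3 * N - 4)) by ring.
  by rewrite hc; nra.
- by rewrite hc; nra.
Qed.

Lemma tau_lt (R : realFieldType) (N c : R) (N3 : 3 <= N)
    (hc : c * (3 * N - 4) = 2 * (N - 2) * (N - 1)) (M S tau : R) :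
  (N - 2) * tau = c * M + S -> S < (c - (N - 2)) * M -> (3 * N - 4) * tau < N * M.
Proof.
move=> htau hS.
have N2 : 0 < N - 2 by lra.
rewrite -(ltr_pM2l N2) mulrA (mulrC (N - 2)) -mulrA htau.
have -> : (N - 2) * (N * M) = (3 * N - 4) * ((2 * c - N + 2) * M).
  have -> : (3 * N - 4) * ((2 * c - N + 2) * M) =
    (2 * (c * (3 * N - 4)) - (N - 2) * (3 * N - 4)) * M by ring.
  by rewrite hc; ring.
by rewrite ltr_pM2l; lra.
Qed.

(* Below, p counts the coordinates above the cutoff and Q the negative ones.
   The constraints force p to be at most N / 2. *)
Lemma count_above_half (R : realFieldType) (N c : R) (N3 : 3 <= N)
    (hc : c * (3 * N - 4) = 2 * (N - 2) * (N - 1)) (M tau p Q : R) :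
  0 < M ->
  (1 + c - Q) * M <= (N - 1 - p) * tau -> (3 * N - 4) * tau < N * M ->
  1 <= Q -> p + Q <= N -> 2 * p <= N.
Proof.
move=> M0 h1 h2 Q1 pQ.
have K0 : 0 < 3 * N - 4 by lra.
have e1 : (3 * N - 4) * ((1 + c - N + p) * M) <= (N - 1 - p) * (N * M).
  have : (1 + c - N + p) * M <= (N - 1 - p) * tau by nra.
  rewrite -(ler_pM2l K0) => /le_trans; apply.
  rewrite mulrCA; apply: ler_wpM2l; lra.
have e2 : (3 * N - 4) * ((1 + c - N + p) * M) =
  ((3 * N - 4) * (1 - N + p) + 2 * (N - 2) * (N - 1)) * M.
  rewrite -hc; ring.
rewrite e2 mulrA ler_pM2r // in e1.
nra.
Qed.

(* The core inequality: a lower bound, linear in tau, for the gain of the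
   cutoff vector is nonnegative.  The two cases follow the sign of the
   coefficient N + Q - 3 p of tau. *)
Lemma threshold_balance (R : realFieldType) (N c : R) (N3 : 3 <= N)
    (hc : c * (3 * N - 4) = 2 * (N - 2) * (N - 1)) (M tau p Q : R) :
  0 < M ->
  (1 + c - Q) * M <= (N - 1 - p) * tau -> (3 * N - 4) * tau < N * M ->
  1 <= p -> 1 <= Q -> p + Q <= N ->
  0 <= (N - 2) * (2 * M + (3 * p - Q - N) * tau) + (N - 2 - 2 * p) * c * M.
Proof.
move=> M0 h1 h2 p1 Q1 pQ.
have [c_gt c_lt] := const_bounds N3 hc.
have K0 : 0 < 3 * N - 4 by lra.
have [hcase|hcase] := lerP 0 (N + Q - 3 * p).
- rewrite -(pmulr_rge0 _ K0).
  have -> : (3 * N - 4) * ((N - 2) * (2 * M + (3 * p - Q - N) * tau) + (N - 2 - 2 * p) * c * M)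
     = (N - 2) * (2 * (3 * N - 4) * M - (N + Q - 3 * p) * ((3 * N - 4) * tau))
       + (N - 2 - 2 * p) * (c * (3 * N - 4)) * M by ring.
  rewrite hc.
  have e1 : (N + Q - 3 * p) * ((3 * N - 4) * tau) <= (N + Q - 3 * p) * (N * M).
    by apply: ler_wpM2l => //; apply: ltW.
  have e2 : 0 <= (N - 2) * M * (N * N - 4 - N * Q + p * (4 - N)).
    by apply: mulr_ge0; nra.
  nra.
- have hp := count_above_half N3 hc M0 h1 h2 Q1 pQ.
  have tau0 : 0 <= tau.
    rewrite leNgt; apply/negP => tn.
    have : (1 + c - Q) * M <= 0 * M by rewrite mul0r; nra.
    rewrite ler_pM2r //; lra.
  have e1 : 0 <= (N - 2) * ((3 * p - Q - N) * tau) by apply: mulr_ge0; nra.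
  have e3 : -2 * c * M <= (N - 2 - 2 * p) * c * M.
    rewrite -!mulrA; apply: ler_wpM2r; first by apply: mulr_ge0; lra.
    lra.
  nra.
Qed.

(* The gain of the cutoff vector in terms of the aggregates X (sum of the
   coordinates above the cutoff, the largest being M) and Ns (minus the sum of
   the negative coordinates), reduced to threshold_balance. *)
Lemma threshold_sum_nonneg (R : realFieldType) (N c : R) (N3 : 3 <= N)
    (hc : c * (3 * N - 4) = 2 * (N - 2) * (N - 1)) (M tau S X Ns p Q : R) :
  0 < M -> (N - 2) * tau = c * M + S -> S < (c - (N - 2)) * M ->
  X - S <= Ns -> Ns <= Q * M -> M - tau <= X - p * tau ->
  1 <= p -> 1 <= Q -> p + Q <= N ->
  0 <= (N - 2) * (X - p * tau) + 2 * S * p + (N - 2) * (Ns - Q * tau).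
Proof.
move=> M0 htau hS hXS hNQ hX p1 Q1 pQ.
have hS' : S = (N - 2) * tau - c * M by lra.
have h1 : (1 + c - Q) * M <= (N - 1 - p) * tau by rewrite hS' in hXS; nra.
have := threshold_balance N3 hc M0 h1 (tau_lt N3 hc htau hS) p1 Q1 pQ.
have : 0 <= (N - 2) * (2 * ((X - p * tau) - (M - tau)) + (Ns - (X - S))).
  by apply: mulr_ge0; lra.
rewrite hS'; nra.
Qed.

Definition sign_compatible (R : realFieldType) (n : nat) (w x : 'I_n -> R) : Prop :=
  (forall i, 0 <= w i * x i) /\ (forall i j, 0 <= (w i + w j) * (x i + x j)).

Definition cutoff (R : realFieldType) (th t : R) : R :=
  if th < t then 1 else if t < - th then -1 else 0.

Lemma cutoff_sign_compatible (R : realFieldType) (n : nat) (th : R) (x : 'I_n -> R) :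
  0 <= th -> sign_compatible (fun i => cutoff th (x i)) x.
Proof.
move=> th0; split=> [i|i j]; rewrite /cutoff.
  case: (ltrP th (x i)) => h1; first by rewrite mul1r; lra.
  case: (ltrP (x i) (- th)) => h2; last by rewrite mul0r.
  by rewrite mulN1r; lra.
case: (ltrP th (x i)) => h1; case: (ltrP th (x j)) => h2;
try case: (ltrP (x i) (- th)) => h3; try case: (ltrP (x j) (- th)) => h4;
rewrite ?addrN ?mul0r ?add0r ?addr0 ?mul1r ?mulN1r //; lra.
Qed.

(* Coordinatewise lower bound for the gain of a cutoff vector with threshold
   th = max 0 tau, matching the aggregates of threshold_sum_nonneg. *)
Lemma cutoff_term (R : realFieldType) (N c M S tau th t : R) :
  (N - 2) * tau = c * M + S -> 0 <= th -> tau <= th -> (0 < th -> th = tau) -> 0 < N - 2 ->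
  (N - 2) * ((if th < t then t else 0) - (if th < t then 1 else 0) * tau)
  + 2 * S * (if th < t then 1 else 0)
  + (N - 2) * ((if t < 0 then - t else 0) - (if t < 0 then 1 else 0) * tau)
   <= cutoff th t * ((N - 2) * t + S) - c * M * `|cutoff th t|.
Proof.
move=> htau th0 thtau thpos N2; rewrite /cutoff.
case: (ltrP th t) => h1.
  have -> : (t < 0) = false by apply/negbTE; rewrite -leNgt; lra.
  rewrite normr1; lra.
case: (ltrP t (- th)) => h2.
  have -> : (t < 0) = true by apply/idP; lra.
  rewrite normrN normr1; lra.
case: (ltrP t 0) => h3 /=; rewrite normr0; last by lra.
have e : th = tau by apply: thpos; lra.
nra.
Qed.

(* Gain of the cutoff test vector when the coordinate sum S is very negative.
   Here tau is the level at which a coordinate above the cutoff breaks even. *)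
Lemma cutoff_gain (R : realFieldType) (n : nat) (c tau : R) (x : 'I_n -> R) (k : 'I_n) :
  let N := n%:R in let M := x k in let S := \sum_j x j in
  let th := Num.max 0 tau in
  3 <= N -> c * (3 * N - 4) = 2 * (N - 2) * (N - 1) ->
  (forall j, `|x j| <= M) -> 0 < M ->
  (N - 2) * tau = c * M + S -> S < (c - (N - 2)) * M -> th < M ->
  c * M * \sum_i `|cutoff th (x i)| <= \sum_i cutoff th (x i) * ((N - 2) * x i + S).
Proof.
move=> N M S th N3 hc hx Mpos htau Sneg thM.
have [_ c_lt] := const_bounds N3 hc.
have N2 : 0 < N - 2 by lra.
have hxl j : - M <= x j by move: (hx j); rewrite ler_norml => /andP[].
have th0 : 0 <= th by rewrite le_max lexx.
have thtau : tau <= th by rewrite le_max lexx orbT.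
have thpos : 0 < th -> th = tau by rewrite /th lt_max ltxx /= => /ltW/max_r.
pose P1 i : R := if th < x i then 1 else 0.
pose Q1 i : R := if x i < 0 then 1 else 0.
pose Xi i : R := if th < x i then x i else 0.
pose Ni i : R := if x i < 0 then - x i else 0.
set p := \sum_i P1 i; set Q := \sum_i Q1 i; set X := \sum_i Xi i; set Ns := \sum_i Ni i.
have hXS : X - S <= Ns.
  rewrite /X /S /Ns -sumrB; apply: ler_sum => i _; rewrite /Xi /Ni.
  by case: (ltrP th (x i)) => h1; case: (ltrP (x i) 0) => h2; lra.
have hNQ : Ns <= Q * M.
  rewrite /Ns /Q mulr_suml; apply: ler_sum => i _; rewrite /Ni /Q1.
  by have := hxl i; case: (ltrP (x i) 0) => h2; rewrite ?mul1r ?mul0r; lra.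
have hXp : M - tau <= X - p * tau.
  rewrite /X /p mulr_suml -sumrB (bigD1 k) //= {1}/Xi {1}/P1 -/M thM mul1r lerDl.
  by apply: sumr_ge0 => i _; rewrite /Xi /P1; case: ltrP => h1; rewrite ?mul1r ?mul0r; lra.
have hp1 : 1 <= p.
  rewrite /p (bigD1 k) //= {1}/P1 -/M thM lerDl.
  by apply: sumr_ge0 => i _; rewrite /P1; case: ltrP.
have hQ1 : 1 <= Q.
  have QE : Q = (\sum_i nat_of_bool (x i < 0)%R)%:R.
    by rewrite natr_sum; apply: eq_bigr => i _; rewrite /Q1; case: (x i < 0)%R.
  have hXM : M <= X.
    rewrite /X (bigD1 k) //= {1}/Xi -/M thM lerDl.
    by apply: sumr_ge0 => i _; rewrite /Xi; case: ltrP => h1; lra.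
  have S0 : S < 0 by nra.
  have : 0 < Q * M by lra.
  by rewrite pmulr_lgt0 // QE ltr0n ler1n.
have hpQ : p + Q <= N.
  rewrite /p /Q -big_split /N -[n in n%:R]card_ord -sumr_const.
  apply: ler_sum => i _ /=; rewrite /P1 /Q1.
  by case: (ltrP th (x i)) => h1; case: (ltrP (x i) 0) => h2; lra.
have := threshold_sum_nonneg N3 hc Mpos htau Sneg hXS hNQ hXp hp1 hQ1 hpQ.
have -> : (N - 2) * (X - p * tau) + 2 * S * p + (N - 2) * (Ns - Q * tau) =
  \sum_i ((N - 2) * (Xi i - P1 i * tau) + 2 * S * P1 i + (N - 2) * (Ni i - Q1 i * tau)).
  by rewrite !big_split /= -!mulr_sumr !sumrB -!mulr_suml.
move=> /le_trans /(_ (ler_sum _ (fun i _ => cutoff_term (x i) htau th0 thtau thpos N2))).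
by rewrite sumrB -mulr_sumr subr_ge0.
Qed.

Lemma test_vector_exists (R : realFieldType) (n : nat) (c : R) (x : 'I_n -> R) (k : 'I_n) :
  let N := n%:R in let M := x k in let S := \sum_j x j in
  3 <= N -> c * (3 * N - 4) = 2 * (N - 2) * (N - 1) ->
  (forall j, `|x j| <= M) ->
  exists2 w, sign_compatible w x &
    0 < \sum_i `|w i| /\ c * M * \sum_i `|w i| <= \sum_i w i * ((N - 2) * x i + S).
Proof.
move=> N M S N3 hc hx.
have [_ c_lt] := const_bounds N3 hc.
have hxl j : - M <= x j by move: (hx j); rewrite ler_norml => /andP[].
have Sge : - (N * M) <= S.
  rewrite (_ : - (N * M) = \sum_(j < n) - M); last first.
    by rewrite sumr_const card_ord -mulr_natl mulrN.
  by apply: ler_sum => j _; exact: hxl.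
have M0 : 0 <= M by apply: le_trans (hx k); exact: normr_ge0.
have [hM|hM] := lerP (c * M) ((N - 2) * M + S).
  pose w i : R := (i == k)%:R.
  have onek (F : 'I_n -> R) : \sum_i w i * F i = F k.
    rewrite (bigD1 k) //= big1 => [|i /negbTE h]; first by rewrite /w eqxx mul1r addr0.
    by rewrite /w h mul0r.
  exists w.
    split=> [i|i j]; rewrite /w; first by case: (i =P k) => [->|_]; rewrite ?mul1r ?mul0r.
    case: (i =P k) => [->|_]; case: (j =P k) => [->|_];
      rewrite /= ?mul1r ?mul0r ?add0r ?addr0 -/M; have := hxl i; have := hxl j; nra.
  have -> : \sum_i `|w i| = \sum_i w i * 1.
    by apply: eq_bigr => i _; rewrite /w mulr1; case: (i =P k); rewrite ?normr1 ?normr0.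
  by rewrite !onek mulr1; split; [exact: ltr01 | exact: hM].
have N2 : 0 < N - 2 by lra.
have Mpos : 0 < M.
  rewrite lt_neqAle M0 andbT; apply/eqP => M0'.
  by move: hM Sge; rewrite -M0' !mulr0 oppr0; lra.
set tau : R := (c * M + S) / (N - 2).
have htau : (N - 2) * tau = c * M + S by rewrite /tau mulrC divfK // lt0r_neq0.
have Sneg : S < (c - (N - 2)) * M by lra.
have thM : Num.max 0 tau < M by rewrite gt_max Mpos -(ltr_pM2l N2) htau /=; nra.
pose w i := cutoff (Num.max 0 tau) (x i).
have sw : 1 <= \sum_i `|w i|.
  by rewrite (bigD1 k) //= {1}/w /cutoff -/M thM normr1 lerDl sumr_ge0.
exists w; first by apply: cutoff_sign_compatible; rewrite le_max lexx.
split; first exact: lt_le_trans ltr01 sw.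
exact: cutoff_gain.
Qed.

Lemma sym_entry (R : realFieldType) (n : nat) (A : 'M[R]_n) (i j : 'I_n) :
  A^T = A -> A j i = A i j.
Proof. by move=> sym; rewrite -{1}sym mxE. Qed.

Lemma dd_nonneg_row (R : realFieldType) (n : nat) (A : 'M[R]_n) (i : 'I_n) :
  diag_dominant A -> (forall i j, 0 <= A i j) ->
  \sum_(j < n | j != i) A i j <= A i i.
Proof.
move=> dd pos; have := dd i; rewrite /Delta subr_ge0 ger0_norm //.
by under eq_bigr do rewrite ger0_norm //.
Qed.

Lemma row_ident (R : realFieldType) n (A : 'M[R]_n) (l : R) (x : 'I_n -> R) (i : 'I_n) :
  \sum_j (A i j - l) * (x i + x j) =
  x i * \sum_j A i j + \sum_j A i j * x j - l * (n%:R * x i + \sum_j x j).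
Proof.
have -> : n%:R * x i = \sum_(j < n) x i by rewrite sumr_const card_ord mulr_natl.
rewrite mulr_sumr mulrDr !mulr_sumr -!big_split -sumrB /=.
by apply: eq_bigr => j _; ring.
Qed.

(* The duality inequality: pairing the symmetric nonnegative matrix A - l
   against (w_i + w_j) (x_i + x_j), and using diagonal dominance on the diagonal,
   bounds the weighted sum of A x from below. *)
Lemma weighted_lower_bound (R : realFieldType) n (A : 'M[R]_n) (l : R) (x w : 'I_n -> R) :
  A^T = A -> diag_dominant A -> (forall i j, l <= A i j) -> (forall i j, 0 <= A i j) ->
  sign_compatible w x ->
  l * \sum_i w i * ((n%:R - 2) * x i + \sum_j x j) <= \sum_i w i * \sum_j A i j * x j.
Proof.
move=> sym dd lA pos [wx wxx].
pose k i j := (A i j - l) * (w i * (x i + x j)).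
pose g i j := (A i j - l) * ((w i + w j) * (x i + x j)).
have gk : \sum_i \sum_j g i j = 2 * \sum_i \sum_j k i j.
  have -> : \sum_i \sum_j g i j = \sum_i \sum_j k i j + \sum_i \sum_j k j i.
    rewrite -big_split /=; apply: eq_bigr => i _; rewrite -big_split /=.
    by apply: eq_bigr => j _; rewrite /g /k (sym_entry i j sym); ring.
  by rewrite [in X in _ + X]exchange_big /=; ring.
have kid i : \sum_j k i j =
   w i * (x i * \sum_j A i j + \sum_j A i j * x j - l * (n%:R * x i + \sum_j x j)).
  by rewrite -row_ident mulr_sumr; apply: eq_bigr => j _; rewrite /k; ring.
rewrite -subr_ge0.
have -> : \sum_i w i * \sum_j A i j * x j - l * \sum_i w i * ((n%:R - 2) * x i + \sum_j x j)
    = \sum_i ((\sum_j g i j) / 2 - w i * x i * (\sum_j A i j - 2 * l)).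
  rewrite sumrB -mulr_suml gk (mulrC 2) mulfK ?pnatr_eq0 //.
  by rewrite mulr_sumr -!sumrB; apply: eq_bigr => i _; rewrite kid; ring.
apply: sumr_ge0 => i _.
rewrite (bigD1 i) //= [X in X - 2 * l](bigD1 i) //= subr_ge0.
have h1 : 0 <= \sum_(j < n | j != i) g i j.
  by apply: sumr_ge0 => j _; apply: mulr_ge0; [rewrite subr_ge0|exact: wxx].
have h2 := dd_nonneg_row i dd pos.
have h4 : g i i = 4 * (A i i - l) * (w i * x i) by rewrite /g; ring.
rewrite h4; have := wx i; have := lA i i; move: h1 h2; nra.
Qed.

Lemma weighted_sum_le (R : realFieldType) (n : nat) (w y : 'I_n -> R) (Y : R) :
  (forall i, `|y i| <= Y) -> \sum_i w i * y i <= Y * \sum_i `|w i|.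
Proof.
move=> hy; rewrite mulr_sumr; apply: ler_sum => i _.
apply: le_trans (ler_norm _) _; rewrite normrM mulrC.
by apply: ler_wpM2r => //; exact: hy.
Qed.

Section LowerBound.
Variables (R : realFieldType) (n : nat) (A : 'M[R]_n) (l c : R).
Hypothesis sym : A^T = A.
Hypothesis dd : diag_dominant A.
Hypothesis lA : forall i j, l <= A i j.
Hypothesis nonneg : forall i j, 0 <= A i j.
Hypothesis l_gt0 : 0 < l.
Hypothesis n3 : 3 <= n%:R :> R.
Hypothesis hc : c * (3 * n%:R - 4) = 2 * (n%:R - 2) * (n%:R - 1).

Lemma max_coord_lower_bound (x : 'I_n -> R) (k : 'I_n) (Y : R) :
  (forall j, `|x j| <= x k) -> (forall i, `|\sum_j A i j * x j| <= Y) ->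
  l * (c * x k) <= Y.
Proof.
move=> hx hy.
have [w wx [sw gain]] := test_vector_exists n3 hc hx.
rewrite -(ler_pM2r sw); apply: le_trans (weighted_sum_le w hy).
apply: le_trans (weighted_lower_bound sym dd lA nonneg wx).
by rewrite -mulrA ler_pM2l.
Qed.

(* The lower bound for an arbitrary vector: reduce to a largest coordinate,
   negating x if that coordinate is negative. *)
Lemma sup_norm_lower (x : 'I_n -> R) (Y : R) :
  (forall i, `|\sum_j A i j * x j| <= Y) -> forall j, l * (c * `|x j|) <= Y.
Proof.
move=> hy j.
have [k _ hk] := @eq_bigmax _ _ _ 0 j predT (fun i => `|x i|) isT (fun i _ => normr_ge0 (x i)).
have hle i : `|x i| <= `|x k| by rewrite -hk; exact: le_bigmax.
have c0 : 0 <= c by have [] := const_bounds n3 hc; lra.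
apply: le_trans (_ : l * (c * `|x k|) <= Y).
  by apply: ler_wpM2l; [exact: ltW | exact: ler_wpM2l].
case: (lerP 0 (x k)) => xk.
  by rewrite ger0_norm //; apply: max_coord_lower_bound => // i; rewrite -(ger0_norm xk).
rewrite ltr0_norm //; apply: (@max_coord_lower_bound (fun i => - x i)) => [i|i].
  by rewrite normrN -(ltr0_norm xk).
by under eq_bigr do rewrite mulrN; rewrite sumrN normrN.
Qed.

Lemma lc_gt0 : 0 < l * c.
Proof.
have [c_gt _] := const_bounds n3 hc; have N3 := n3.
by apply: mulr_gt0 => //; lra.
Qed.

(* A is injective, hence invertible. *)
Lemma sym_dd_unitmx : A \in unitmx.
Proof.
rewrite -row_free_unit -kermx_eq0; apply/eqP/matrixP => r j.
have hz i : `|\sum_j A i j * kermx A r j| <= 0.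
  have : (kermx A *m A) r i = 0 by rewrite mulmx_ker mxE.
  rewrite mxE => e; rewrite (eq_bigr (fun j => kermx A r j * A j i)) ?e ?normr0 //.
  by move=> j' _; rewrite mulrC (sym_entry _ _ sym).
have := sup_norm_lower hz j; rewrite mulrA pmulr_rle0 ?lc_gt0 // normr_le0.
by move/eqP->; rewrite mxE.
Qed.

(* Row i of A^-1, paired with the signs of its entries, is a vector x with
   ||A x||_oo <= 1 whose i-th coordinate is the i-th absolute row sum. *)
Lemma inf_norm_invmx_le : inf_norm (invmx A) <= (l * c)^-1.
Proof.
rewrite /inf_norm; apply: bigmax_le; first by rewrite invr_ge0 ltW ?lc_gt0.
move=> i _; set B := invmx A.
pose x r := \sum_j B r j * Num.sg (B i j).
have hy q : `|\sum_r A q r * x r| <= 1.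
  have -> : \sum_r A q r * x r = \sum_j (A *m B) q j * Num.sg (B i j).
    rewrite /x; under eq_bigr do rewrite mulr_sumr.
    rewrite exchange_big /=; apply: eq_bigr => j _; rewrite mxE mulr_suml.
    by apply: eq_bigr => r _; rewrite mulrA.
  rewrite mulmxV ?sym_dd_unitmx // (bigD1 q) //= big1 => [|j /negbTE h].
    by rewrite mxE eqxx mulr1n mul1r addr0 normr_sg; case: (B i q != 0).
  by rewrite mxE eq_sym h mulr0n mul0r.
have hx : x i = \sum_j `|B i j| by apply: eq_bigr => j _; rewrite normrEsg mulrC.
rewrite -hx; apply: le_trans (ler_norm _) _.
by rewrite -(ler_pM2l lc_gt0) mulfV ?lt0r_neq0 ?lc_gt0 // -mulrA sup_norm_lower.
Qed.
End LowerBound.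

Lemma min_entry_le (R : realFieldType) (n : nat) (A : 'M[R]_n) (i j : 'I_n) :
  min_entry A <= A i j.
Proof. by apply: (bigmin_inf i) => //; exact: bigmin_le. Qed.

Lemma min_entry_gt0 (R : realFieldType) (n : nat) (A : 'M[R]_n) (i0 : 'I_n) :
  (forall i j, 0 < A i j) -> 0 < min_entry A.
Proof.
move=> pos; have maxE : 0 < max_entry A.
  by apply: lt_le_trans (pos i0 i0) _; apply: (bigmax_sup i0) => //; exact: le_bigmax.
by apply/bigmin_gtP; split=> // i _; apply/bigmin_gtP.
Qed.

(* ||A||_oo <= 2 m (N - 1) + delta: a row sum is Delta_i plus twice the
   off-diagonal sum, and there are N - 1 off-diagonal entries bounded by m. *)
Lemma inf_norm_le_offdiag (R : realFieldType) (n : nat) (A : 'M[R]_n) :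
  (0 < n)%N -> (forall i j, 0 <= A i j) ->
  inf_norm A <= 2 * max_offdiag A * (n%:R - 1) + max_Delta A.
Proof.
case: n A => [//|n] A _ nonneg; rewrite -[n.+1%:R]natr1 addrK; set m := max_offdiag A.
have m0 : 0 <= m by exact: bigmax_ge_id.
have Am i j : j != i -> `|A i j| <= m.
  by move=> hij; rewrite ger0_norm //; apply: (bigmax_sup i) => //; exact: (bigmax_sup j).
apply: bigmax_le => [|i _]; first by rewrite addr_ge0 ?bigmax_ge_id // !mulr_ge0.
have -> : \sum_j `|A i j| = Delta A i + 2 * \sum_(j < n.+1 | j != i) `|A i j|.
  by rewrite (bigD1 i) //= /Delta; ring.
have off : \sum_(j < n.+1 | j != i) `|A i j| <= m * n%:R.
  apply: le_trans (ler_sum _ (fun j => Am i j)) _.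
  have -> : \sum_(j < n.+1 | j != i) m = m * n%:R.
    apply: (addrI m); rewrite mulr_natr -mulrS -[in RHS](card_ord n.+1) -sumr_const.
    by rewrite [in RHS](bigD1 i).
  exact: lexx.
have : Delta A i <= max_Delta A by exact: (bigmax_sup i).
lra.
Qed.

Theorem mainTheorem5 (R : realFieldType) (n : nat) (A : 'M[R]_n) :
  (3 <= n)%N ->
  A^T = A ->
  diag_dominant A ->
  (forall i j, 0 < A i j) ->
  cond_inf A <=
    ((2 * max_offdiag A * (n - 1)%:R + max_Delta A) * (3 * n - 4)%:R)
    / (2 * min_entry A * (n - 2)%:R * (n - 1)%:R).
Proof.
move=> n3 sym dd pos.
have n0 : (0 < n)%N by apply: leq_trans n3.
have nonneg i j : 0 <= A i j by apply: ltW.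
have l0 := min_entry_gt0 (Ordinal n0) pos.
have N3 : 3 <= n%:R :> R by rewrite (ler_nat R 3 n).
have K0 : 0 < 3 * n%:R - 4 :> R by lra.
set c : R := 2 * (n%:R - 2) * (n%:R - 1) / (3 * n%:R - 4).
have hc : c * (3 * n%:R - 4) = 2 * (n%:R - 2) * (n%:R - 1) by rewrite divfK ?lt0r_neq0.
have normB := inf_norm_invmx_le sym dd (min_entry_le A) nonneg l0 N3 hc.
have normA := inf_norm_le_offdiag n0 nonneg.
have nA0 : 0 <= inf_norm A by exact: bigmax_ge_id.
have nB0 : 0 <= inf_norm (invmx A) by exact: bigmax_ge_id.
apply: le_trans (ler_pM nA0 nB0 normA normB) _; rewrite le_eqVlt; apply/orP; left; apply/eqP.
rewrite !natrB ?natrM ?(leq_trans _ n3) //; last first.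
  by apply: (@leq_trans (3 * 3)); rewrite // leq_mul2l n3.
by rewrite /c; field; rewrite !lt0r_neq0 //=; lra.
Qed.
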